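(* Let $f$ be a real-valued symmetric ternary tensor in $(\mathbb{C}^3)^{\otimes 3}$, and suppose there exist $\alpha,\beta_1,\beta_2\in\mathbb{C}^3$ with $f=\alpha^{\otimes 3}+\beta_1^{\otimes 3}+\beta_2^{\otimes 3}$ and $\langle\alpha,\beta_i\rangle=\langle\beta_i,\beta_i\rangle=0$ for $i=1,2$. Then there is a $3\times 3$ real orthogonal matrix $T$, $\epsilon\in\{0,1\}$, and $c,\lambda\in\mathbb{R}$ with $c\neq 0$, such that $$c\,T^{\otimes 3}f=\epsilon\big(\beta_0^{\otimes 3}+\overline{\beta_0}^{\otimes 3}\big)+\lambda\, e_3^{\otimes 3},\qquad \beta_0=(1,i,0)^T.$$ Consequently there exist $\alpha\in\mathbb{R}^3$ and $\beta\in\mathbb{C}^3$ such that $f=\alpha^{\otimes 3}+\beta^{\otimes 3}+\overline{\beta}^{\otimes 3}$ with $\langle\alpha,\beta\rangle=\langle\beta,\beta\rangle=0$.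
   Context: Ternary signatures on a 3-element domain are identified with tensors in $(\mathbb{C}^3)^{\otimes 3}$; symmetric means invariant under permutation of the three arguments. For $u,v\in\mathbb{C}^n$, $\langle u,v\rangle=\sum_j u_jv_j$ (bilinear, no conjugation). $\overline{\beta}$ is the entrywise complex conjugate. $e_3=(0,0,1)^T$. For a matrix $T$, $Tf$ denotes $T^{\otimes 3}f$. *)

From HB Require Import structures.
From mathcomp Require Import all_boot all_order all_algebra.
From mathcomp Require Import complex.
From mathcomp Require Import reals.
Set Implicit Arguments. Unset Strict Implicit. Unset Printing Implicit Defensive.
Import Order.TTheory GRing.Theory Num.Theory.
Local Open Scope ring_scope.
Local Open Scope complex_scope.

Section Defs.
Variable R : realType.
Local Notation C := R[i].

Definition vec3 := 'I_3 -> C.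
Definition tens3 := 'I_3 -> 'I_3 -> 'I_3 -> C.

(* bilinear (no conjugation) pairing <u,v> = sum_j u_j v_j *)
Definition bil (u v : vec3) : C := \sum_(j < 3) u j * v j.

Definition conjv (v : vec3) : vec3 := fun j => conjc (v j).

Definition cube (v : vec3) : tens3 := fun i j k => v i * v j * v k.

Definition tadd (f g : tens3) : tens3 := fun i j k => f i j k + g i j k.
Definition tscale (c : C) (f : tens3) : tens3 := fun i j k => c * f i j k.

Definition real_tens (f : tens3) : Prop := forall i j k, complex.Im (f i j k) = 0.

Definition sym_tens (f : tens3) : Prop := forall i j k,
  [/\ f i j k = f j i k, f i j k = f i k j, f i j k = f k j i,
      f i j k = f j k i & f i j k = f k i j].

Definition orthogonal3 (T : 'M[R]_3) : Prop := T *m T^T = 1%:M.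

Definition tact (T : 'M[R]_3) (f : tens3) : tens3 := fun i j k =>
  \sum_(a < 3) \sum_(b < 3) \sum_(c < 3)
     (T i a)%:C * (T j b)%:C * (T k c)%:C * f a b c.

Definition e3 : vec3 := fun j => if val j == 2%N then 1 else 0.
Definition beta0 : vec3 := fun j =>
  if val j == 0%N then 1 else if val j == 1%N then 'i else 0.

Definition rvec (a : 'I_3 -> R) : vec3 := fun j => (a j)%:C.
End Defs.

(* If <alpha, alpha> != 0, the contraction f_ajj = <alpha, alpha> alpha_a is real,
   so alpha is a complex multiple of a real vector u.  If alpha != 0 is isotropic,
   then beta1 and beta2 are multiples of alpha and f is a real multiple of one
   isotropic cube, hence f = 0.  If alpha = 0 and n = beta1 x beta2 != 0, the
   realness of f makes beta1 and beta2 orthogonal to conj n as well as to n, hence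
   to the real vector Re n or Im n, which plays the role of u (with alpha = 0).
   A reflection sends u to e3; the beta_i become isotropic vectors of e3^perp,
   i.e. multiples of beta0 or of its conjugate, so the tensor is
   mu^3 e3^3 + A beta0^3 + B conj(beta0)^3, and realness forces mu^3 real and
   B = conj A.  A rotation about e3 by the argument of a cube root of A brings it
   to l e3^3 + r^3 (beta0^3 + conj(beta0)^3), from which both statements follow by
   scaling and by taking real cube roots. *)

From HB Require Import structures.
From mathcomp Require Import all_boot all_order all_algebra.
From mathcomp Require Import complex reals boolp.
From mathcomp Require Import ring lra.
Set Implicit Arguments. Unset Strict Implicit. Unset Printing Implicit Defensive.
Import Order.TTheory GRing.Theory Num.Theory.
Local Open Scope ring_scope.
Local Open Scope complex_scope.

Local Notation i0 := (@Ordinal 3 0 isT).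
Local Notation i1 := (@Ordinal 3 1 isT).
Local Notation i2 := (@Ordinal 3 2 isT).

Lemma sum3E (V : nmodType) (F : 'I_3 -> V) : \sum_(j < 3) F j = F i0 + F i1 + F i2.
Proof.
rewrite !big_ord_recr big_ord0 /= add0r.
by congr (F _ + F _ + F _); apply/val_inj.
Qed.

Lemma ord3P (i : 'I_3) : [\/ i = i0, i = i1 | i = i2].
Proof.
by case: i => [[|[|[|//]]] ?]; [constructor 1 | constructor 2 | constructor 3];
  apply/val_inj.
Qed.

(* Lets [ring] and [field] prove identities that hold only modulo [e = 0]. *)
Lemma eq_modulo (V : pzRingType) (x y k e : V) : e = 0 -> x - y = k * e -> x = y.
Proof. by move=> -> /eqP; rewrite mulr0 subr_eq0 => /eqP. Qed.

Section SumsOfIsotropicCubes.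
Variable R : realType.
Local Notation C := R[i].
Local Notation vec3 := (vec3 R).
Local Notation tens3 := (tens3 R).
Local Notation beta0 := (beta0 R).
Local Notation e3 := (e3 R).
Local Notation Re := complex.Re.
Local Notation Im := complex.Im.
Implicit Types x y : vec3.

Lemma tens3_ext (f g : tens3) : (forall i j k, f i j k = g i j k) -> f = g.
Proof. by move=> fg; do 3![apply: funext => ?]; apply: fg. Qed.

Lemma vec3_ext (u v : vec3) : u i0 = v i0 -> u i1 = v i1 -> u i2 = v i2 -> u = v.
Proof. by move=> *; apply: funext => i; case: (ord3P i) => ->. Qed.

Lemma beta0E : (beta0 i0 = 1) * (beta0 i1 = 'i%C) * (beta0 i2 = 0).
Proof. by []. Qed.

Lemma conj_beta0E :
  (conjv beta0 i0 = 1) * (conjv beta0 i1 = - 'i%C) * (conjv beta0 i2 = 0).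
Proof. by do ![split]; apply/eqP; rewrite eq_complex /= ?oppr0 !eqxx. Qed.

Lemma e3E : (e3 i0 = 0) * (e3 i1 = 0) * (e3 i2 = 1).
Proof. by []. Qed.

Definition vscale (c : C) (v : vec3) : vec3 := fun j => c * v j.
Definition tzero : tens3 := fun _ _ _ => 0.

Definition mxv (T : 'M[R]_3) (v : vec3) : vec3 :=
  fun i => \sum_(a < 3) (T i a)%:C * v a.

Lemma tact_add T (f g : tens3) : tact T (tadd f g) = tadd (tact T f) (tact T g).
Proof. by apply: tens3_ext => i j k; rewrite /tact /tadd !sum3E; ring. Qed.

Lemma tact_scale T c (f : tens3) : tact T (tscale c f) = tscale c (tact T f).
Proof. by apply: tens3_ext => i j k; rewrite /tact /tscale !sum3E; ring. Qed.

Lemma tact_cube T (v : vec3) : tact T (cube v) = cube (mxv T v).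
Proof. by apply: tens3_ext => i j k; rewrite /tact /cube /mxv !sum3E; ring. Qed.

Lemma mxv_mul (A B : 'M[R]_3) v : mxv (A *m B) v = mxv A (mxv B v).
Proof.
apply: funext => i; rewrite /mxv !sum3E !mxE !sum3E !rmorphD !rmorphM; ring.
Qed.

Lemma mxv1 v : mxv 1%:M v = v.
Proof. by apply: vec3_ext; rewrite /mxv sum3E !mxE /=; ring. Qed.

Lemma vscaleA a b v : vscale a (vscale b v) = vscale (a * b) v.
Proof. by apply: funext => i; rewrite /vscale mulrA. Qed.

Lemma mxv_scale T c v : mxv T (vscale c v) = vscale c (mxv T v).
Proof. by apply: funext => i; rewrite /mxv /vscale !sum3E; ring. Qed.

Lemma cube_scale c v : cube (vscale c v) = tscale (c ^+ 3) (cube v).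
Proof. by apply: tens3_ext => i j k; rewrite /cube /vscale /tscale; ring. Qed.

Lemma bilC (u v : vec3) : bil u v = bil v u.
Proof. by rewrite /bil !sum3E; ring. Qed.

Lemma bilZl c (u v : vec3) : bil (vscale c u) v = c * bil u v.
Proof. by rewrite /bil /vscale !sum3E; ring. Qed.

Lemma bilZr c (u v : vec3) : bil u (vscale c v) = c * bil u v.
Proof. by rewrite bilC bilZl bilC. Qed.

Lemma orthogonal3_mul (A B : 'M[R]_3) :
  orthogonal3 A -> orthogonal3 B -> orthogonal3 (A *m B).
Proof. by rewrite /orthogonal3 trmx_mul mulmxA -(mulmxA A) => A_orth ->; rewrite mulmx1. Qed.

Lemma orthogonal3_tr (T : 'M[R]_3) : orthogonal3 T -> orthogonal3 T^T.
Proof. by rewrite /orthogonal3 trmxK => /mulmx1C. Qed.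

Lemma bil_mxv T (u v : vec3) : orthogonal3 T -> bil (mxv T u) (mxv T v) = bil u v.
Proof.
move=> /mulmx1C /matrixP TtT.
have colT a b : \sum_(k < 3) T k a * T k b = (a == b)%:R.
  by have := TtT a b; rewrite !mxE => <-; apply: eq_bigr => k _; rewrite mxE.
have -> : bil (mxv T u) (mxv T v) =
    \sum_(a < 3) \sum_(b < 3) (\sum_(k < 3) T k a * T k b)%:C * u a * v b.
  by rewrite /bil /mxv !sum3E !rmorphD !rmorphM; ring.
under eq_bigr do under eq_bigr do rewrite colT.
by rewrite /bil !sum3E /=; ring.
Qed.

Lemma conjcD (z w : C) : conjc (z + w) = conjc z + conjc w.
Proof. by case: z w => [a b] [c d]; simpc. Qed.

Lemma conjcM (z w : C) : conjc (z * w) = conjc z * conjc w.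
Proof. by case: z w => [a b] [c d]; simpc. Qed.

Lemma conjv_mxv T v : conjv (mxv T v) = mxv T (conjv v).
Proof. by apply: funext => i; rewrite /conjv /mxv !sum3E !conjcD !conjcM !conjc_real. Qed.

Lemma conjvZ c v : conjv (vscale c v) = vscale (conjc c) (conjv v).
Proof. by apply: funext => i; rewrite /conjv /vscale conjcM. Qed.

Lemma ImD (z w : C) : Im (z + w) = Im z + Im w.
Proof. by case: z w => [a b] [c d]. Qed.

Lemma ImM (z w : C) : Im (z * w) = Re z * Im w + Im z * Re w.
Proof. by case: z w => [a b] [c d] /=; ring. Qed.

Lemma real_complexRe (z : C) : Im z = 0 -> z = (Re z)%:C.
Proof. by case: z => a b /= ->. Qed.

Lemma conjc_Im0 (z : C) : Im z = 0 -> conjc z = z.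
Proof. by case: z => a b /= ->; rewrite oppr0. Qed.

Lemma real_sum3 (F : 'I_3 -> C) : (forall j, Im (F j) = 0) -> Im (\sum_(j < 3) F j) = 0.
Proof. by move=> F_real; rewrite sum3E !ImD !F_real !addr0. Qed.

Lemma real_tact T (f : tens3) : real_tens f -> real_tens (tact T f).
Proof.
move=> f_real i j k; do 3!apply: real_sum3 => ?.
by rewrite !ImM f_real /=; ring.
Qed.

Lemma vec3_eq0_or_neq0 (v : vec3) : (forall j, v j = 0) \/ exists j, v j != 0.
Proof.
case: (v i0 =P 0) => [v0|/eqP]; last by right; exists i0.
case: (v i1 =P 0) => [v1|/eqP]; last by right; exists i1.
case: (v i2 =P 0) => [v2|/eqP]; last by right; exists i2.
by left => j; case: (ord3P j) => ->.
Qed.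

Lemma sqr3_eq0 (x y z : R) : x ^+ 2 + y ^+ 2 + z ^+ 2 = 0 -> [/\ x = 0, y = 0 & z = 0].
Proof.
move=> H; have := sqr_ge0 x; have := sqr_ge0 y; have := sqr_ge0 z => *.
by split; apply/eqP; rewrite -sqrf_eq0; apply/eqP; lra.
Qed.

Lemma sqr_gt0 (x : R) : x != 0 -> 0 < x ^+ 2.
Proof. by move=> x_neq0; rewrite exprn_even_gt0 //= x_neq0 orbT. Qed.

Lemma bil_rvec (u v : 'I_3 -> R) : bil (rvec u) (rvec v) = (\sum_(j < 3) u j * v j)%:C.
Proof. by rewrite /bil /rvec !sum3E !rmorphD !rmorphM. Qed.

Lemma rvec_isotropic (w : 'I_3 -> R) : bil (rvec w) (rvec w) = 0 -> forall j, w j = 0.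
Proof.
rewrite bil_rvec sum3E => /complexI; rewrite -!expr2 => /sqr3_eq0 [w0 w1 w2] j.
by case: (ord3P j) => ->.
Qed.

Lemma rvec_normalize (w : 'I_3 -> R) (j : 'I_3) : w j != 0 ->
  exists (u : 'I_3 -> R) (t : R),
    [/\ u i0 ^+ 2 + u i1 ^+ 2 + u i2 ^+ 2 = 1, t != 0 & rvec w = vscale t%:C (rvec u)].
Proof.
move=> wj; pose n2 := w i0 ^+ 2 + w i1 ^+ 2 + w i2 ^+ 2.
have n2_gt0 : 0 < n2.
  have := sqr_ge0 (w i0); have := sqr_ge0 (w i1); have := sqr_ge0 (w i2).
  have := sqr_gt0 wj.
  by rewrite /n2; case: (ord3P j) => -> *; lra.
pose t := Num.sqrt n2.
have t2 : t ^+ 2 = n2 by rewrite sqr_sqrtr // ltW.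
have t_neq0 : t != 0 by rewrite sqrtr_eq0 -ltNge.
exists (fun i => w i / t), t; split => //.
  by rewrite !expr_div_n -!mulrDl -/n2 -t2 divff // expf_neq0.
by apply: funext => i; rewrite /vscale /rvec -rmorphM mulrC divfK.
Qed.

(* [K b_j^2 b] is a real vector, and real vectors are anisotropic. *)
Lemma real_isotropic_cube_eq0 (K : C) (b : vec3) :
  bil b b = 0 -> real_tens (tscale K (cube b)) -> tscale K (cube b) = tzero.
Proof.
move=> b_iso Kb_real; case: (K =P 0) => [->|/eqP K_neq0].
  by apply: tens3_ext => i j k; rewrite /tscale mul0r.
case: (vec3_eq0_or_neq0 b) => [b0|[j bj]].
  by apply: tens3_ext => i j k; rewrite /tscale /cube !b0 !mulr0.
exfalso; pose w k := Re (K * (b j * b j * b k)).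
have wE k : (w k)%:C = K * (b j ^+ 2) * b k.
  by rewrite -real_complexRe ?(Kb_real j j k) // mulrA -expr2.
have Kbj_neq0 : K * b j ^+ 2 != 0 by rewrite mulf_neq0 ?expf_neq0.
have b_rvec : b = vscale (K * b j ^+ 2)^-1 (rvec w).
  by apply: funext => k; rewrite /vscale /rvec wE mulKf.
have w_iso : bil (rvec w) (rvec w) = 0.
  move: b_iso; rewrite {1 2}b_rvec bilZl bilZr => /eqP.
  by rewrite !mulf_eq0 invr_eq0 (negbTE Kbj_neq0) => /eqP.
have /eqP := congr1 (real_complex R) (rvec_isotropic w_iso j).
by rewrite wE rmorph0 mulf_eq0 (negbTE Kbj_neq0) (negbTE bj).
Qed.

Definition cross x y : vec3 := fun k =>
  if val k == 0%N then x i1 * y i2 - x i2 * y i1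
  else if val k == 1%N then x i2 * y i0 - x i0 * y i2
  else x i0 * y i1 - x i1 * y i0.

Lemma cross_minor x y k : exists a a', cross x y k = x a * y a' - x a' * y a.
Proof. by case: (ord3P k) => ->; [exists i1, i2 | exists i2, i0 | exists i0, i1]. Qed.

Lemma minor_cross x y a b : exists k (s : C), x a * y b - x b * y a = s * cross x y k.
Proof.
rewrite /cross; case: (ord3P a) => ->; case: (ord3P b) => ->;
  first [ by exists i0, 0; rewrite subrr mul0r
        | by exists i0, 1; rewrite /= mul1r | by exists i1, 1; rewrite /= mul1r
        | by exists i2, 1; rewrite /= mul1r | by exists i0, (-1); rewrite /=; ring
        | by exists i1, (-1); rewrite /=; ring | by exists i2, (-1); rewrite /=; ring ].
Qed.

Lemma bil_cross x y : bil x (cross x y) = 0 /\ bil y (cross x y) = 0.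
Proof. by rewrite /bil !sum3E /cross /=; split; ring. Qed.

(* Lagrange's identity expresses [cross x y k ^+ 2] through the Gram entries of [x], [y]. *)
Lemma cross_isotropic x y : bil x x = 0 -> bil y y = 0 -> bil x y = 0 ->
  forall k, cross x y k = 0.
Proof.
move=> xx yy xy k; apply/eqP; rewrite -sqrf_eq0; apply/eqP.
have -> : cross x y k ^+ 2 = bil x x * (bil y y - y k ^+ 2)
    - bil x y * (bil x y - x k * y k) + x k * (bil x y * y k - bil y y * x k).
  by rewrite /bil !sum3E /cross; case: (ord3P k) => -> /=; ring.
by rewrite xx yy xy; ring.
Qed.

Lemma cross_eq0_proportional x y j : (forall k, cross x y k = 0) -> x j != 0 ->
  y = vscale (y j / x j) x.
Proof.
move=> xy0 xj; apply: funext => k; rewrite /vscale.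
have [l [s /eqP]] := minor_cross x y j k; rewrite xy0 mulr0 subr_eq0 => /eqP jk.
by apply: (mulfI xj); rewrite jk; field.
Qed.

Lemma cross_neq0_indep (c1 c2 : C) x y k :
  (forall a b, c1 * x a * x b + c2 * y a * y b = 0) -> cross x y k != 0 ->
  c1 = 0 /\ c2 = 0.
Proof.
move=> Q xyk; have [a [a' xyE]] := cross_minor x y k.
have c1E b : c1 * x b * cross x y k = y a' * (c1 * x a * x b + c2 * y a * y b)
    - y a * (c1 * x a' * x b + c2 * y a' * y b) by rewrite xyE; ring.
have c2E b : c2 * y b * cross x y k = x a * (c1 * x a' * x b + c2 * y a' * y b)
    - x a' * (c1 * x a * x b + c2 * y a * y b) by rewrite xyE; ring.
have [b xb] : exists b, x b != 0.
  case: (vec3_eq0_or_neq0 x) => [x0|//].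
  by move: xyk; rewrite xyE !x0 !mul0r subrr eqxx.
have [b' yb'] : exists b, y b != 0.
  case: (vec3_eq0_or_neq0 y) => [y0|//].
  by move: xyk; rewrite xyE !y0 !mulr0 subrr eqxx.
split; apply/eqP.
- by move/eqP: (c1E b); rewrite !Q !mulr0 subrr !mulf_eq0 (negbTE xb) (negbTE xyk) !orbF.
- by move/eqP: (c2E b'); rewrite !Q !mulr0 subrr !mulf_eq0 (negbTE yb') (negbTE xyk) !orbF.
Qed.

Lemma orthogonal3_1 : orthogonal3 (1%:M : 'M[R]_3).
Proof. by rewrite /orthogonal3 trmx1 mulmx1. Qed.

Definition e3r : 'I_3 -> R := fun j => if val j == 2%N then 1 else 0.

Lemma e3_rvec : e3 = rvec e3r.
Proof. exact: vec3_ext. Qed.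

Lemma mxv_rvec T (u : 'I_3 -> R) :
  mxv T (rvec u) = rvec (fun i => \sum_(k < 3) T i k * u k).
Proof. by apply: funext => i; rewrite /mxv /rvec !sum3E !rmorphD !rmorphM. Qed.

(* The Householder reflection exchanging the unit vector [u] and [e3]. *)
Lemma orthogonal3_to_e3 (u : 'I_3 -> R) : u i0 ^+ 2 + u i1 ^+ 2 + u i2 ^+ 2 = 1 ->
  exists T, orthogonal3 T /\ mxv T (rvec u) = e3.
Proof.
move=> u_unit; have unitE : u i0 ^+ 2 + u i1 ^+ 2 + u i2 ^+ 2 - 1 = 0.
  by rewrite u_unit subrr.
have [u2_1|/eqP u2_neq1] := u i2 =P 1.
  have : u i0 ^+ 2 + u i1 ^+ 2 + 0 ^+ 2 = 0.
    by apply: (eq_modulo (k := 1) unitE); rewrite u2_1; ring.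
  case/sqr3_eq0 => u0 u1 _; exists 1%:M; split; first exact: orthogonal3_1.
  by rewrite mxv1 e3_rvec; apply: vec3_ext; rewrite /rvec /e3r /= ?u0 ?u1 ?u2_1.
have d_neq0 : 1 - u i2 != 0 by rewrite subr_eq0 eq_sym.
pose w i := u i - e3r i.
exists (\matrix_(i < 3, j < 3) ((i == j)%:R - w i * w j / (1 - u i2))); split.
  apply/matrixP => i j; rewrite !mxE sum3E !mxE.
  apply: (eq_modulo (k := w i * w j / (1 - u i2) ^+ 2) unitE).
  by case: (ord3P i) => ->; case: (ord3P j) => ->; rewrite /w /e3r /=; field.
rewrite mxv_rvec e3_rvec; congr rvec; apply: funext => i; rewrite sum3E !mxE.
apply: (eq_modulo (k := - w i / (1 - u i2)) unitE).
by case: (ord3P i) => ->; rewrite /w /e3r /=; field.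
Qed.

Definition rotation_e3 (c s : R) : 'M[R]_3 := \matrix_(i < 3, j < 3)
  if (val i == 2%N) || (val j == 2%N) then (val i == val j)%:R
  else if val i == val j then c else if val i == 0%N then - s else s.

Lemma orthogonal3_rotation_e3 (c s : R) : c ^+ 2 + s ^+ 2 = 1 ->
  orthogonal3 (rotation_e3 c s).
Proof.
move=> cs1; have cs1E : c ^+ 2 + s ^+ 2 - 1 = 0 by rewrite cs1 subrr.
apply/matrixP => i j; rewrite !mxE sum3E !mxE.
apply: (eq_modulo (k := ((i == j) && (val i != 2%N))%:R) cs1E).
by case: (ord3P i) => ->; case: (ord3P j) => -> /=; ring.
Qed.

(* The rotation by [- arg a] about [e3] turns [a beta0] into [|a| beta0]. *)
Lemma rotation_beta0 (a : C) : exists S (r : R),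
  [/\ orthogonal3 S, mxv S e3 = e3 & mxv S (vscale a beta0) = vscale r%:C beta0].
Proof.
case: a => x y; have [xy0|xy_neq0] := boolP ((x == 0) && (y == 0)).
  case/andP: xy0 => /eqP-> /eqP->; exists 1%:M, 0.
  by rewrite !mxv1; split; [exact: orthogonal3_1 | | apply: funext => i; rewrite /vscale !mul0r].
have n2_gt0 : 0 < x ^+ 2 + y ^+ 2.
  have := sqr_ge0 x; have := sqr_ge0 y.
  by case/nandP: xy_neq0 => /sqr_gt0 *; lra.
pose r := Num.sqrt (x ^+ 2 + y ^+ 2).
have r2E : x ^+ 2 + y ^+ 2 - r ^+ 2 = 0 by rewrite sqr_sqrtr ?subrr // ltW.
have r_neq0 : r != 0 by rewrite sqrtr_eq0 -ltNge.
exists (rotation_e3 (x / r) (y / r)), r; split.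
- by apply: orthogonal3_rotation_e3; apply: (eq_modulo (k := 1 / r ^+ 2) r2E); field.
- by apply: vec3_ext; rewrite /mxv sum3E !mxE /=; ring.
- apply: vec3_ext; rewrite /mxv /vscale sum3E !mxE /=; apply/eqP;
    rewrite eq_complex /=; apply/andP; split; apply/eqP;
    first [by apply: (eq_modulo (k := 1 / r) r2E); field | by field].
Qed.

Definition canonical_tensor (l r : R) : tens3 :=
  tadd (tscale l%:C (cube e3)) (tscale (r ^+ 3)%:C (tadd (cube beta0) (cube (conjv beta0)))).

Definition normal_form (f : tens3) := exists (T : 'M[R]_3) (l r : R),
  orthogonal3 T /\ f = tact T^T (canonical_tensor l r).

Lemma tact_canonical_tensorK T l r :
  orthogonal3 T -> tact T (tact T^T (canonical_tensor l r)) = canonical_tensor l r.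
Proof. by move=> T_orth; rewrite !(tact_add, tact_scale, tact_cube) -!mxv_mul T_orth !mxv1. Qed.

Lemma tact_cubes T x y (z : vec3) :
  tact T (tadd (tadd (cube x) (cube y)) (cube z)) =
  tadd (tadd (cube (mxv T x)) (cube (mxv T y))) (cube (mxv T z)).
Proof. by rewrite !(tact_add, tact_cube). Qed.

Lemma tact_cubesK T x y (z : vec3) : orthogonal3 T ->
  tact T^T (tact T (tadd (tadd (cube x) (cube y)) (cube z))) =
  tadd (tadd (cube x) (cube y)) (cube z).
Proof. by move=> /mulmx1C T_orth; rewrite !tact_cubes -!mxv_mul T_orth !mxv1. Qed.

Lemma normal_form0 : normal_form tzero.
Proof.
exists 1%:M, 0, 0; split; first exact: orthogonal3_1.
by apply: tens3_ext => i j k; rewrite /canonical_tensor /tact /tzero /tadd /tscale !sum3E; ring.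
Qed.

Lemma bil_e3 (v : vec3) : bil v e3 = v i2.
Proof. by rewrite /bil sum3E !e3E; ring. Qed.

Lemma isotropic_e3_perp (g : vec3) : g i2 = 0 -> bil g g = 0 ->
  g = vscale (g i0) beta0 \/ g = vscale (g i0) (conjv beta0).
Proof.
move=> g2 g_iso.
have : (g i1 - 'i%C * g i0) * (g i1 + 'i%C * g i0) = 0.
  transitivity (bil g g - g i2 ^+ 2 - ('i%C ^+ 2 + 1) * g i0 ^+ 2).
    by rewrite /bil !sum3E; ring.
  by rewrite sqr_i g_iso g2; ring.
move/eqP; rewrite mulf_eq0 subr_eq0 addr_eq0 => /orP[]/eqP g1E;
  [left | right]; apply: vec3_ext; rewrite /vscale ?beta0E ?conj_beta0E ?g1E ?g2; ring.
Qed.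

Lemma cubes_e3_perp (g1 g2 : vec3) : g1 i2 = 0 -> g2 i2 = 0 ->
  bil g1 g1 = 0 -> bil g2 g2 = 0 -> exists A B : C,
  tadd (cube g1) (cube g2) = tadd (tscale A (cube beta0)) (tscale B (cube (conjv beta0))).
Proof.
move=> /isotropic_e3_perp g1E /isotropic_e3_perp g2E /g1E[]-> /g2E[]->;
  rewrite !cube_scale;
  [exists (g1 i0 ^+ 3 + g2 i0 ^+ 3), 0 | exists (g1 i0 ^+ 3), (g2 i0 ^+ 3)
  | exists (g2 i0 ^+ 3), (g1 i0 ^+ 3) | exists 0, (g1 i0 ^+ 3 + g2 i0 ^+ 3)];
  by apply: tens3_ext => i j k; rewrite /tadd /tscale; ring.
Qed.

Lemma real_e3_beta0 (m A B : C) : real_tens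
    (tadd (tscale m (cube e3)) (tadd (tscale A (cube beta0)) (tscale B (cube (conjv beta0))))) ->
  Im m = 0 /\ B = conjc A.
Proof.
move=> real_f; move: (real_f i2 i2 i2) (real_f i0 i0 i0) (real_f i1 i1 i1).
rewrite /tadd /tscale /cube !e3E !beta0E !conj_beta0E; clear real_f.
case: m A B => [m1 m2] [a1 a2] [b1 b2] /= E2 E0 E1; split.
  by apply: (eq_modulo (k := 1) E2); ring.
by congr Complex; [apply: (eq_modulo (k := 1) E1) | apply: (eq_modulo (k := 1) E0)]; ring.
Qed.

Lemma canonical_e3_axis (mu : C) (g1 g2 : vec3) :
  g1 i2 = 0 -> g2 i2 = 0 -> bil g1 g1 = 0 -> bil g2 g2 = 0 ->
  real_tens (tadd (tadd (cube (vscale mu e3)) (cube g1)) (cube g2)) ->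
  exists S (l r : R), orthogonal3 S /\
    tact S (tadd (tadd (cube (vscale mu e3)) (cube g1)) (cube g2)) = canonical_tensor l r.
Proof.
move=> g1e3 g2e3 g1_iso g2_iso h_real.
have [A [B gE]] := cubes_e3_perp g1e3 g2e3 g1_iso g2_iso.
have hE : tadd (tadd (cube (vscale mu e3)) (cube g1)) (cube g2) =
    tadd (tscale (mu ^+ 3) (cube e3)) (tadd (tscale A (cube beta0)) (tscale B (cube (conjv beta0)))).
  by rewrite -gE cube_scale; apply: tens3_ext => ? ? ?; rewrite /tadd /tscale; ring.
move: h_real; rewrite hE => /real_e3_beta0[mu3_real BE].
have [a aE] : exists a, A = a ^+ 3 by exists (3.-root A); rewrite rootCK.
have [S [r [S_orth Se3 Sa]]] := rotation_beta0 a.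
have Sa' : mxv S (conjv (vscale a beta0)) = vscale r%:C (conjv beta0).
  by rewrite -conjv_mxv Sa conjvZ conjc_real.
exists S, (Re (mu ^+ 3)), r; split => //.
have -> : tadd (tscale A (cube beta0)) (tscale B (cube (conjv beta0))) =
    tadd (cube (vscale a beta0)) (cube (conjv (vscale a beta0))).
  by rewrite BE aE conjvZ !cube_scale !exprS !expr0 !conjcM conjc1.
rewrite !(tact_add, tact_scale, tact_cube) Se3 Sa Sa' !cube_scale /canonical_tensor.
rewrite -(real_complexRe mu3_real).
by apply: tens3_ext => ? ? ?; rewrite /tadd /tscale rmorphXn; ring.
Qed.

Lemma normal_form_axis (f : tens3) (mu : C) (w : 'I_3 -> R) (b1 b2 : vec3) (j : 'I_3) :
  real_tens f -> w j != 0 ->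
  f = tadd (tadd (cube (vscale mu (rvec w))) (cube b1)) (cube b2) ->
  bil b1 (rvec w) = 0 -> bil b2 (rvec w) = 0 -> bil b1 b1 = 0 -> bil b2 b2 = 0 ->
  normal_form f.
Proof.
move=> f_real /rvec_normalize[u [t [u_unit t_neq0 wE]]] fE b1w b2w b1_iso b2_iso.
have tC_neq0 : t%:C != 0 :> C by apply/eqP => /complexI /eqP; apply/negP.
have [T1 [T1_orth T1u]] := orthogonal3_to_e3 u_unit.
have e3_perp b : bil b (rvec w) = 0 -> mxv T1 b i2 = 0.
  rewrite -bil_e3 -T1u bil_mxv // wE bilZr => /eqP.
  by rewrite mulf_eq0 (negbTE tC_neq0) => /eqP.
have T1f : tact T1 f = tadd (tadd (cube (vscale (mu * t%:C) e3))
    (cube (mxv T1 b1))) (cube (mxv T1 b2)).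
  by rewrite fE tact_cubes wE !mxv_scale T1u vscaleA.
have := real_tact T1 f_real; rewrite T1f => /(canonical_e3_axis (e3_perp _ b1w) (e3_perp _ b2w)
  (etrans (bil_mxv _ _ T1_orth) b1_iso) (etrans (bil_mxv _ _ T1_orth) b2_iso)).
move=> [S [l [r [S_orth Sh]]]]; have ST1_orth := orthogonal3_mul S_orth T1_orth.
exists (S *m T1), l, r; split => //.
rewrite {1}fE -(tact_cubesK _ _ _ ST1_orth) -fE; congr tact.
have -> : tact (S *m T1) f = tact S (tact T1 f) by rewrite fE !tact_cubes !mxv_mul.
by rewrite T1f.
Qed.

Definition contract (f : tens3) : vec3 := fun a => \sum_(j < 3) f a j j.

Lemma contract_add (f g : tens3) a : contract (tadd f g) a = contract f a + contract g a.
Proof. by rewrite /contract /tadd !sum3E; ring. Qed.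

Lemma contract_cube (v : vec3) a : contract (cube v) a = bil v v * v a.
Proof. by rewrite /contract /cube /bil !sum3E; ring. Qed.

Lemma real_contract (f : tens3) a : real_tens f -> Im (contract f a) = 0.
Proof. by move=> f_real; apply: real_sum3. Qed.

Lemma normal_form_anisotropic (f : tens3) (alpha b1 b2 : vec3) : real_tens f ->
  f = tadd (tadd (cube alpha) (cube b1)) (cube b2) ->
  bil alpha b1 = 0 -> bil b1 b1 = 0 -> bil alpha b2 = 0 -> bil b2 b2 = 0 ->
  bil alpha alpha != 0 -> normal_form f.
Proof.
move=> f_real fE ab1 b1_iso ab2 b2_iso q_neq0; set q := bil alpha alpha in q_neq0.
pose w a := Re (contract f a).
have wE : rvec w = vscale q alpha.
  apply: funext => a; rewrite /rvec -real_complexRe ?real_contract //.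
  by rewrite fE !contract_add !contract_cube b1_iso b2_iso !mul0r !addr0.
have [j alpha_j] : exists j, alpha j != 0.
  case: (vec3_eq0_or_neq0 alpha) => [alpha0|//].
  by move: q_neq0; rewrite /q /bil sum3E !alpha0 mul0r !addr0 eqxx.
have w_j : w j != 0.
  apply: contraNneq (mulf_neq0 q_neq0 alpha_j) => wj0.
  by rewrite -[q * _]/(vscale q alpha j) -wE /rvec wj0.
have alphaE : alpha = vscale q^-1 (rvec w).
  by apply: funext => a; rewrite wE /vscale mulKf.
have perp b : bil b alpha = 0 -> bil b (rvec w) = 0 by rewrite wE bilZr => ->; rewrite mulr0.
apply: (normal_form_axis (mu := q^-1) f_real w_j _ (perp _ _) (perp _ _) b1_iso b2_iso).
- by rewrite -alphaE.
- by rewrite bilC.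
- by rewrite bilC.
Qed.

Lemma normal_form_cube (f : tens3) (K : C) (b : vec3) : real_tens f ->
  f = tscale K (cube b) -> bil b b = 0 -> normal_form f.
Proof.
by move=> f_real fE b_iso; rewrite fE real_isotropic_cube_eq0 -?fE //; apply: normal_form0.
Qed.

Lemma normal_form_isotropic (f : tens3) (alpha b1 b2 : vec3) (j : 'I_3) : real_tens f ->
  f = tadd (tadd (cube alpha) (cube b1)) (cube b2) ->
  bil alpha b1 = 0 -> bil b1 b1 = 0 -> bil alpha b2 = 0 -> bil b2 b2 = 0 ->
  bil alpha alpha = 0 -> alpha j != 0 -> normal_form f.
Proof.
move=> f_real fE ab1 b1_iso ab2 b2_iso a_iso alpha_j.
have b1E := cross_eq0_proportional (cross_isotropic a_iso b1_iso ab1) alpha_j.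
have b2E := cross_eq0_proportional (cross_isotropic a_iso b2_iso ab2) alpha_j.
move: (b1 j / alpha j) (b2 j / alpha j) b1E b2E => k1 k2 b1E b2E.
apply: (normal_form_cube (K := 1 + k1 ^+ 3 + k2 ^+ 3) f_real _ a_iso).
rewrite fE b1E b2E !cube_scale.
by apply: tens3_ext => ? ? ?; rewrite /tadd /tscale; ring.
Qed.

Lemma bil_Re_Im (b v : vec3) : bil b v = 0 -> bil b (conjv v) = 0 ->
  bil b (rvec (fun l => Re (v l))) = 0 /\ bil b (rvec (fun l => Im (v l))) = 0.
Proof.
move=> bv bvc; split.
  transitivity ((bil b v + bil b (conjv v)) / 2%:R); last by rewrite bv bvc; ring.
  by rewrite /bil /rvec /conjv !sum3E !ReJ_add; ring.
transitivity ((bil b (conjv v) - bil b v) / 2%:R * 'i%C); last by rewrite bv bvc; ring.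
by rewrite /bil /rvec /conjv !sum3E !ImJ_sub; ring.
Qed.

Lemma real_contract_conj (f : tens3) (v : vec3) a b : real_tens f ->
  \sum_(l < 3) f a b l * conjc (v l) = conjc (\sum_(l < 3) f a b l * v l).
Proof. by move=> f_real; rewrite !sum3E !conjcD !conjcM !(conjc_Im0 (f_real _ _ _)). Qed.

(* For [n = b1 x b2 != 0], realness of [f] makes [b1] and [b2] orthogonal to
   [conj n] as well, hence to the real vectors [Re n] and [Im n]. *)
Lemma normal_form_two_cubes (f : tens3) (b1 b2 : vec3) : real_tens f ->
  f = tadd (cube b1) (cube b2) -> bil b1 b1 = 0 -> bil b2 b2 = 0 -> normal_form f.
Proof.
move=> f_real fE b1_iso b2_iso.
case: (vec3_eq0_or_neq0 (cross b1 b2)) => [n0|[k nk]].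
  case: (vec3_eq0_or_neq0 b1) => [b1_0|[j b1j]].
    apply: (normal_form_cube (K := 1) f_real _ b2_iso).
    by rewrite fE; apply: tens3_ext => ? ? ?; rewrite /tadd /tscale /cube !b1_0; ring.
  have := cross_eq0_proportional n0 b1j; move: (b2 j / b1 j) => k b2E.
  apply: (normal_form_cube (K := 1 + k ^+ 3) f_real _ b1_iso).
  rewrite fE b2E cube_scale.
  by apply: tens3_ext => ? ? ?; rewrite /tadd /tscale; ring.
set n := cross b1 b2 in nk; have [b1n b2n] := bil_cross b1 b2.
have conj_n_perp a b : bil b1 (conjv n) * b1 a * b1 b + bil b2 (conjv n) * b2 a * b2 b = 0.
  transitivity (\sum_(l < 3) f a b l * conjc (n l)).
    by rewrite fE /tadd /cube /bil /conjv !sum3E; ring.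
  rewrite real_contract_conj //.
  have -> : \sum_(l < 3) f a b l * n l = bil b1 n * b1 a * b1 b + bil b2 n * b2 a * b2 b.
    by rewrite fE /tadd /cube /bil !sum3E; ring.
  by rewrite b1n b2n !mul0r addr0 conjc0.
have [b1nc b2nc] := cross_neq0_indep conj_n_perp nk.
have [b1_re b1_im] := bil_Re_Im b1n b1nc.
have [b2_re b2_im] := bil_Re_Im b2n b2nc.
have f0E w : f = tadd (tadd (cube (vscale 0 (rvec w))) (cube b1)) (cube b2).
  by rewrite fE; apply: tens3_ext => ? ? ?; rewrite /tadd /cube /vscale; ring.
have [re_k|im_k] : Re (n k) != 0 \/ Im (n k) != 0.
  have [re0|] := eqVneq (Re (n k)) 0; [right | by left].
  by apply: contra nk => /eqP im0; apply/eqP; move: re0 im0; case: (n k) => x y /= -> ->.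
- exact: (normal_form_axis f_real re_k (f0E _) b1_re b2_re b1_iso b2_iso).
- exact: (normal_form_axis f_real im_k (f0E _) b1_im b2_im b1_iso b2_iso).
Qed.

Lemma normal_form_sum_of_cubes (f : tens3) (alpha b1 b2 : vec3) : real_tens f ->
  f = tadd (tadd (cube alpha) (cube b1)) (cube b2) ->
  bil alpha b1 = 0 -> bil b1 b1 = 0 -> bil alpha b2 = 0 -> bil b2 b2 = 0 ->
  normal_form f.
Proof.
move=> f_real fE ab1 b1_iso ab2 b2_iso.
have [a_iso|a_aniso] := eqVneq (bil alpha alpha) 0; last first.
  exact: normal_form_anisotropic f_real fE ab1 b1_iso ab2 b2_iso a_aniso.
case: (vec3_eq0_or_neq0 alpha) => [alpha0|[j alpha_j]].
  apply: (normal_form_two_cubes f_real _ b1_iso b2_iso).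
  by rewrite fE; apply: tens3_ext => ? ? ?; rewrite /tadd /cube !alpha0; ring.
exact: normal_form_isotropic f_real fE ab1 b1_iso ab2 b2_iso a_iso alpha_j.
Qed.

Lemma real_cube_root (l : R) : exists c : R, c ^+ 3 = l.
Proof.
suff nonneg (x : R) : 0 <= x -> exists c : R, c ^+ 3 = x.
  have [/nonneg//|l_lt0] := lerP 0 l.
  have [c cE] : exists c : R, c ^+ 3 = - l by apply: nonneg; lra.
  by exists (- c); rewrite exprNn cE /=; ring.
move=> x_ge0; pose z := 3.-root (x%:C : C).
have zE : z = (Re z)%:C by apply/real_complexRe/ger0_Im; rewrite rootC_ge0 // ler0c.
exists (Re z); apply: complexI.
have -> : ((Re z) ^+ 3)%:C = (Re z)%:C ^+ 3 by ring.
by rewrite -zE rootCK.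
Qed.

Lemma normal_form_scaled (f : tens3) : normal_form f ->
  exists (T : 'M[R]_3) (eps : bool) (c lam : R),
    [/\ orthogonal3 T, c != 0 & tscale c%:C (tact T f) =
      tadd (tscale (eps%:R)%:C (tadd (cube beta0) (cube (conjv beta0))))
           (tscale lam%:C (cube e3))].
Proof.
move=> [T [l [r [T_orth ->]]]].
suff [eps [c [lam [c_neq0 cE]]]] : exists (eps : bool) (c lam : R), c != 0 /\
    tscale c%:C (canonical_tensor l r) = tadd (tscale (eps%:R)%:C
      (tadd (cube beta0) (cube (conjv beta0)))) (tscale lam%:C (cube e3)).
  by exists T, eps, c, lam; rewrite tact_canonical_tensorK.
have [r0|r_neq0] := eqVneq r 0.
  exists false, 1, l; split; rewrite ?oner_neq0 //.
  by apply: tens3_ext => ? ? ?; rewrite /canonical_tensor /tadd /tscale r0 /=; ring.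
rewrite /canonical_tensor; move: (r ^+ 3) (expf_neq0 3 r_neq0) => s s_neq0.
have sC_neq0 : s%:C != 0 :> C by apply: contra s_neq0 => /eqP/complexI->.
exists true, s^-1, (l / s); split; rewrite ?invr_eq0 //.
apply: tens3_ext => ? ? ?.
by rewrite /tadd /tscale rmorphM !rmorphV ?unitfE //=; field.
Qed.

Lemma normal_form_decomposition (f : tens3) : normal_form f ->
  exists (a : 'I_3 -> R) (beta : vec3),
    [/\ f = tadd (tadd (cube (rvec a)) (cube beta)) (cube (conjv beta)),
        bil (rvec a) beta = 0 & bil beta beta = 0].
Proof.
move=> [T [l [r [T_orth ->]]]]; have [c cE] := real_cube_root l.
have Tt_orth := orthogonal3_tr T_orth.
exists (fun i => c * \sum_(k < 3) T^T i k * e3r k), (vscale r%:C (mxv T^T beta0)).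
have aE : rvec (fun i => c * \sum_(k < 3) T^T i k * e3r k) = vscale c%:C (mxv T^T e3).
  by rewrite e3_rvec mxv_rvec; apply: funext => i; rewrite /rvec /vscale rmorphM.
rewrite aE !bilZl !bilZr !bil_mxv //; split.
- rewrite conjvZ conjc_real conjv_mxv !cube_scale -cE /canonical_tensor.
  rewrite !(tact_add, tact_scale, tact_cube) rmorphXn.
  by apply: tens3_ext => ? ? ?; rewrite /tadd /tscale; ring.
- by rewrite /bil sum3E !e3E !beta0E; ring.
- by have := sqr_i R; rewrite expr2 /bil sum3E !beta0E => ->; ring.
Qed.

End SumsOfIsotropicCubes.

Theorem mainTheorem3 (R : realType) (f : tens3 R)
  (alpha beta1 beta2 : vec3 R) :
  real_tens f -> sym_tens f ->
  f = tadd (tadd (cube alpha) (cube beta1)) (cube beta2) ->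
  bil alpha beta1 = 0 -> bil beta1 beta1 = 0 ->
  bil alpha beta2 = 0 -> bil beta2 beta2 = 0 ->
  (exists (T : 'M[R]_3) (eps : bool) (c lam : R),
      [/\ orthogonal3 T, c != 0 &
        tscale c%:C (tact T f) =
        tadd (tscale (eps%:R)%:C (tadd (cube (beta0 R)) (cube (conjv (beta0 R)))))
             (tscale lam%:C (cube (e3 R)))])
  /\
  (exists (a : 'I_3 -> R) (beta : vec3 R),
      [/\ f = tadd (tadd (cube (rvec a)) (cube beta)) (cube (conjv beta)),
          bil (rvec a) beta = 0 & bil beta beta = 0]).
Proof.
move=> f_real _ fE ab1 b1_iso ab2 b2_iso.
have f_normal := normal_form_sum_of_cubes f_real fE ab1 b1_iso ab2 b2_iso.
by split; [apply: normal_form_scaled | apply: normal_form_decomposition].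
Qed.
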